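(* Let $M$ be a sharp, integral monoid and $\Gamma=(X,r,i,l)$ an $M$-metrised graph. Then $\operatorname{dgon}(\Gamma)\le\operatorname{ggon}(\Gamma)$.
   Context: Monoids are commutative, sharp (only unit $0$), integral (cancellative), with groupification $M^{gp}$; $\langle m\rangle=\{km:k\in\mathbb Z\}\subseteq M^{gp}$ and for $x=km$, $m\ne0$, $x/m:=k$. A graph is $(X,r,i)$, $X$ finite, $r$ idempotent, $i$ an involution, $i(x)=x\iff r(x)=x$; vertices $V$ = fixed points, half-edges $H=X\setminus V$, edges $\{e,i(e)\}$ joining $r(e),r(i(e))$, $H_v=\{e\in H:r(e)=v\}$; graphs are connected; a tree is a graph without cycles. An $M$-metrised graph adds $l:X\to M$ with $l(i(x))=l(x)$, $l(x)=0\iff x\in V$. Divisors: elements of the free abelian group on $V$, partially ordered pointwise; $\operatorname{Div}^k_+$ = effective divisors of degree $k$. $\operatorname{PL}(\Gamma)=\{g:V\to M^{gp}: g(r(e))-g(r(i(e)))\in\langle l(e)\rangle\ \forall e\in H\}$; $\Delta(g)=\sum_{v}\big(\sum_{e\in H_v}\frac{g(v)-g(r(i(e)))}{l(e)}\big)[v]$; $D\sim D'$ iff $D-D'\in\Delta(\operatorname{PL}(\Gamma))$; $|D|=\{E\ge0:E\sim D\}$; $r(D)=\max\{k\in\mathbb Z:|D-F|\ne\emptyset\ \forall F\in\operatorname{Div}^k_+(\Gamma)\}$; $\operatorname{dgon}(\Gamma)=\min\{\deg D: r(D)\ge1\}$. A morphism $\phi:\Gamma\to\Gamma'$ is a map $X\to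 X'$ with $\phi(V)\subseteq V'$; if $\phi(e)=e'\in H'$ then $\phi(r(e))=r'(e')$, $\phi(r(i(e)))=r'(i'(e'))$, $l'(e')\in\langle l(e)\rangle$; if $\phi(e)=v'\in V'$ then $\phi(r(e))=\phi(r(i(e)))=v'$. Slope $\mu_\phi(e)=l'(\phi(e))/l(e)$ if $\phi(e)\in H'$, else $0$; $m_{\phi,v}(e')=\sum_{e\in H_v,\phi(e)=e'}\mu_\phi(e)$ for $e'\in H'_{\phi(v)}$; harmonic: independent of $e'$ for each $v$, common value $m_\phi(v)$; non-degenerate: $m_\phi(v)>0$ for all $v$; degree of harmonic $\phi$: $\sum_{v:\phi(v)=r'(e')}m_{\phi,v}(e')$ for any $e'\in H'$ (independent of $e'$). $\operatorname{ggon}(\Gamma)$ = minimum of $\deg\phi$ over $M$-metrised trees $T$ and harmonic non-degenerate morphisms $\phi:\Gamma\to T$, or $\infty$ if none exists. *)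

From HB Require Import structures.
From mathcomp Require Import all_boot all_order all_algebra.

Unset Printing Implicit Defensive.
Import Order.TTheory GRing.Theory Num.Theory.
Local Open Scope ring_scope.

(* Monoids.  A commutative monoid is an [nmodType] (written additively). *)

Definition sharp_monoid (M : nmodType) : Prop :=
  forall a b : M, a + b = 0 -> a = 0.

Definition integral_monoid (M : nmodType) : Prop :=
  forall a b c : M, a + b = a + c -> b = c.

(* (G, iota) is the groupification M^gp of the (integral) monoid M:
   iota is a monoid morphism, injective, and every element of G is a
   difference iota a - iota b (the standard construction of M^gp for an
   integral monoid, up to isomorphism). *)
Definition groupification (M : nmodType) (G : zmodType) (iota : M -> G) : Prop :=
  [/\ iota 0 = 0,
      (forall a b : M, iota (a + b) = iota a + iota b),
      injective iota &
      forall x : G, exists a b : M, x = iota a - iota b].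

(* x \in <m> with x / m = k, i.e. x = k m in M^gp *)
Definition gp_quot (G : zmodType) (x m : G) (k : int) : Prop := x = m *~ k.
Arguments gp_quot {G}.
Arguments groupification {M G}.

Record mgraph (M : nmodType) := MGraph {
  gX : finType;
  gr : gX -> gX;
  gi : gX -> gX;
  gl : gX -> M }.
Arguments MGraph {M}.
Arguments gX {M}.
Arguments gr {M}.
Arguments gi {M}.
Arguments gl {M}.

Set Implicit Arguments.
Unset Strict Implicit.
Section Graph.
Variables (M : nmodType) (Gam : mgraph M).
Local Notation X := (gX Gam).
Local Notation r := (gr Gam).
Local Notation i := (gi Gam).
Local Notation l := (gl Gam).

Definition is_vertex (x : X) : bool := r x == x.
Definition is_half_edge (x : X) : bool := r x != x.

Definition graph_axioms : Prop :=
  [/\ (forall x, r (r x) = r x),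
      (forall x, i (i x) = x) &
      (forall x, i x = x <-> r x = x)].

Definition incid : rel X := fun x y => [|| y == r x, x == r y | y == i x].

Definition graph_connected : Prop :=
  (exists x, is_vertex x) /\ forall x y : X, connect incid x y.

Definition metrised : Prop :=
  (forall x, l (i x) = l x) /\ (forall x, l x = 0 <-> is_vertex x).

Definition is_mgraph : Prop := [/\ graph_axioms, graph_connected & metrised].

Definition graph_cycle (s : seq X) : bool :=
  [&& (0 < size s)%N, all is_half_edge s, uniq (map r s), uniq (s ++ map i s)
    & cycle (fun a b => r (i a) == r b) s].

Definition is_mtree : Prop := is_mgraph /\ forall s, ~~ graph_cycle s.

Definition vtx := {x : X | is_vertex x}.
Definition divisor := vtx -> int.
Definition deg (D : divisor) : int := \sum_(v : vtx) D v.
Definition effective (D : divisor) : Prop := forall v, 0 <= D v.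
Definition div_sub (D D' : divisor) : divisor := fun v => D v - D' v.

Variables (G : zmodType) (iota : M -> G).

(* g : V -> M^gp (given on all of X, only values at vertices matter) is
   piecewise linear with Laplacian Delta(g) = D:  k e = (g(r e) - g(r(i e)))/l(e) *)
Definition in_PL (g : X -> G) : Prop :=
  forall e, is_half_edge e -> exists k, gp_quot (g (r e) - g (r (i e))) (iota (l e)) k.

Definition is_Delta (g : X -> G) (D : divisor) : Prop :=
  exists k : X -> int,
    (forall e, is_half_edge e -> gp_quot (g (r e) - g (r (i e))) (iota (l e)) (k e)) /\
    forall v : vtx, D v = \sum_(e : X | is_half_edge e && (r e == val v)) k e.

Definition lin_equiv (D D' : divisor) : Prop :=
  exists g : X -> G, in_PL g /\ is_Delta g (div_sub D D').

Definition linsys_nonempty (D : divisor) : Prop :=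
  exists E, effective E /\ lin_equiv E D.

Definition rank_cond (D : divisor) (k : int) : Prop :=
  forall F : divisor, effective F -> deg F = k -> linsys_nonempty (div_sub D F).

Definition is_rank (D : divisor) (n : int) : Prop :=
  rank_cond D n /\ forall k, rank_cond D k -> k <= n.

Definition dgon_le (n : int) : Prop :=
  exists D : divisor, (exists rk, is_rank D rk /\ 1 <= rk) /\ deg D <= n.

End Graph.

Section Morphism.
Variables (M : nmodType) (G : zmodType) (iota : M -> G) (Gam T : mgraph M).
Local Notation X := (gX Gam).
Local Notation r := (gr Gam).
Local Notation i := (gi Gam).
Local Notation l := (gl Gam).
Local Notation X' := (gX T).
Local Notation r' := (gr T).
Local Notation i' := (gi T).
Local Notation l' := (gl T).

Definition is_morphism (phi : X -> X') : Prop :=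
  (forall v, is_vertex v -> is_vertex (phi v)) /\
  forall e : X,
    (is_half_edge (phi e) ->
       [/\ phi (r e) = r' (phi e), phi (r (i e)) = r' (i' (phi e))
         & exists k, gp_quot (iota (l' (phi e))) (iota (l e)) k]) /\
    (is_vertex (phi e) -> phi (r e) = phi e /\ phi (r (i e)) = phi e).

Definition is_slope (phi : X -> X') (mu : X -> int) : Prop :=
  forall e, is_half_edge e ->
    (is_half_edge (phi e) -> gp_quot (iota (l' (phi e))) (iota (l e)) (mu e)) /\
    (is_vertex (phi e) -> mu e = 0).

Definition mult_at (phi : X -> X') (mu : X -> int) (v : X) (e' : X') : int :=
  \sum_(e : X | is_half_edge e && (r e == v) && (phi e == e')) mu e.

Definition harmonic (phi : X -> X') (mu : X -> int) (m : X -> int) : Prop :=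
  forall v, is_vertex v -> forall e' : X', is_half_edge e' -> r' e' = phi v ->
    mult_at phi mu v e' = m v.

Definition nondegen_mult (m : X -> int) : Prop :=
  forall v : X, is_vertex v -> 0 < m v.

(* deg phi = n (computed at any half-edge e' of T; requires T to have one) *)
Definition has_degree (phi : X -> X') (mu : X -> int) (n : int) : Prop :=
  (exists e' : X', is_half_edge e') /\
  forall e' : X', is_half_edge e' ->
    \sum_(v : X | is_vertex v && (phi v == r' e')) mult_at phi mu v e' = n.

End Morphism.

From HB Require Import structures.
From mathcomp Require Import all_boot all_order all_algebra.
From mathcomp Require Import zify.
From Stdlib Require Import Classical.
Import Order.TTheory GRing.Theory Num.Theory.
Local Open Scope ring_scope.
Set Implicit Arguments. Unset Strict Implicit.

(* Let phi : Gam -> T be a harmonic non-degenerate morphism of degree n onto an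
   M-metrised tree T, and for a vertex a of T let phi^*[a] be the effective
   divisor sum_{phi(v) = a} m(v)[v]; computing the degree of phi at a half-edge
   e' shows deg phi^*[r e'] = n.  The proof that r(phi^*[a]) >= 1 has three
   ingredients, developed in this order:
   - Laplacians have degree 0 (sharpness makes the slope of a half-edge
     unique and opposite on the two halves), so r(D) <= deg D and a rank exists;
   - in a tree, removing an edge e disconnects its ends (otherwise a shortest
     detour closes a cycle), so the function equal to l(e) on one side of e and
     0 on the other has Laplacian [r e] - [r (i e)];
   - pulling back along phi multiplies Laplacians by the multiplicities.
   Hence all phi^*[a] are linearly equivalent, and every vertex w of Gam lies
   in one of them, namely phi^*[phi w]; so r(phi^*[a]) >= 1. *)

Lemma vertexE (M : nmodType) (Gam : mgraph M) (x : gX Gam) :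
  is_vertex x = ~~ is_half_edge x.
Proof. by rewrite /is_half_edge negbK. Qed.

Section GraphFacts.
Variables (M : nmodType) (Gam : mgraph M).
Local Notation X := (gX Gam).
Local Notation r := (gr Gam).
Local Notation i := (gi Gam).

Lemma sum_vtx (F : X -> int) :
  \sum_(w : vtx Gam) F (val w) = \sum_(x | is_vertex x) F x.
Proof.
rewrite (reindex_omap (val : vtx Gam -> X) insub); last by move=> x vx; rewrite insubT.
by apply: eq_bigl => -[x vx] /=; rewrite insubT ?vx /= eqxx.
Qed.

Hypothesis Hax : graph_axioms Gam.

Lemma r_idem x : r (r x) = r x. Proof. by case: Hax. Qed.
Lemma i_invol x : i (i x) = x. Proof. by case: Hax. Qed.
Lemma vertex_r x : is_vertex (r x). Proof. by rewrite /is_vertex r_idem. Qed.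

Lemma i_vertex v : is_vertex v -> i v = v.
Proof. by case: Hax => _ _ Hfix /eqP /(proj2 (Hfix v)). Qed.

Lemma i_half_edge_neq e : is_half_edge e -> i e != e.
Proof. by case: Hax => _ _ Hfix /eqP he; apply/eqP => /(proj1 (Hfix e)). Qed.

Lemma half_edge_i e : is_half_edge e -> is_half_edge (i e).
Proof.
move=> he; rewrite /is_half_edge; apply: contraNN (i_half_edge_neq he) => vie.
by rewrite -[X in _ == X]i_invol (i_vertex vie).
Qed.

Definition root_vtx (x : X) : vtx Gam := exist _ (r x) (vertex_r x).

Lemma sum_by_root (k : X -> int) :
  \sum_(v : vtx Gam) \sum_(e : X | is_half_edge e && (r e == val v)) k e =
  \sum_(e | is_half_edge e) k e.
Proof. by rewrite (partition_big root_vtx xpredT). Qed.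

End GraphFacts.

Section Groupification.
Variables (M : nmodType) (G : zmodType) (iota : M -> G).
Hypothesis HMsharp : sharp_monoid M.
Hypothesis Hgp : groupification iota.

Lemma iota_mulrn a j : iota (a *+ j) = iota a *+ j.
Proof.
case: Hgp => iota0 iotaD _ _; elim: j => [|j IH]; first by rewrite !mulr0n.
by rewrite !mulrS iotaD IH.
Qed.

Lemma gp_torsion_free a z : a != 0 -> iota a *~ z = 0 -> z = 0.
Proof.
case: Hgp => iota0 _ iota_inj _ a_neq0.
have multiple_neq0 j : iota a *+ j.+1 != 0.
  apply: contraNneq a_neq0; rewrite -iota_mulrn -iota0 => /iota_inj.
  by rewrite mulrS => /HMsharp ->.
case: z => [[|j]|j] //= /eqP; first by rewrite (negPf (multiple_neq0 j)).
by rewrite NegzE mulrNz oppr_eq0 (negPf (multiple_neq0 j)).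
Qed.

Lemma gp_quot_unique a x j k :
  a != 0 -> gp_quot x (iota a) j -> gp_quot x (iota a) k -> j = k.
Proof.
rewrite /gp_quot => a_neq0 -> /eqP; rewrite -subr_eq0 -mulrzBr => /eqP.
by move/(gp_torsion_free a_neq0)/eqP; rewrite subr_eq0 => /eqP.
Qed.

End Groupification.

Section Laplacian.
Variables (M : nmodType) (Gam : mgraph M) (G : zmodType) (iota : M -> G).
Local Notation X := (gX Gam).
Local Notation l := (gl Gam).
Hypothesis Hax : graph_axioms Gam.
Hypothesis Hmet : metrised Gam.
Hypothesis HMsharp : sharp_monoid M.
Hypothesis Hgp : groupification iota.

Lemma length_neq0 e : is_half_edge e -> l e != 0.
Proof. by case: Hmet => _ Hl; apply: contraNneq => /Hl. Qed.

(* Every Laplacian has degree 0: the slopes of the two halves of an edge are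
   opposite, so their contributions cancel. *)
Lemma Laplacian_deg0 (g : X -> G) (D : divisor Gam) : is_Delta iota g D -> deg D = 0.
Proof.
case=> k [slope_k Dk]; rewrite /deg (eq_bigr _ (fun v _ => Dk v)) (sum_by_root Hax).
set S := \sum_(e | _) _.
suff : S = - S by lia.
rewrite {2}/S (reindex_inj (can_inj (i_invol Hax))) /= -sumrN.
apply: eq_big => [e | e he].
  by apply/idP/idP => [/(half_edge_i Hax) | /(half_edge_i Hax)]; rewrite ?(i_invol Hax).
apply: (gp_quot_unique HMsharp Hgp (length_neq0 he) (slope_k e he)).
case: Hmet => l_i _; rewrite /gp_quot mulrNz -l_i -slope_k ?(half_edge_i Hax) //.
by rewrite (i_invol Hax) opprB.
Qed.

End Laplacian.

Section LinearEquivalence.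
Variables (M : nmodType) (Gam : mgraph M) (G : zmodType) (iota : M -> G).
Local Notation X := (gX Gam).

Lemma Delta_PL (g : X -> G) D : is_Delta iota g D -> in_PL iota g.
Proof. by case=> k [slope_k _] e he; exists (k e); apply: slope_k. Qed.

Lemma Delta_ext (g : X -> G) (D D' : divisor Gam) :
  (forall v, D v = D' v) -> is_Delta iota g D -> is_Delta iota g D'.
Proof. by move=> DD' [k [slope_k Dk]]; exists k; split => // v; rewrite -DD'. Qed.

Lemma lin_equiv_ext (D1 D2 D1' D2' : divisor Gam) :
  (forall v, D1 v - D2 v = D1' v - D2' v) ->
  lin_equiv iota D1 D2 -> lin_equiv iota D1' D2'.
Proof. by move=> eqD [g [PLg Dg]]; exists g; split => //; apply: Delta_ext Dg. Qed.

Lemma lin_equiv_refl (D : divisor Gam) : lin_equiv iota D D.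
Proof.
have Delta0 : is_Delta iota (fun _ => 0) (div_sub D D).
  exists (fun _ => 0); split => [e _ | v]; first by rewrite /gp_quot subr0 mulr0z.
  by rewrite /div_sub subrr big1.
by exists (fun _ => 0); split => //; apply: Delta_PL Delta0.
Qed.

(* The Laplacian is additive, hence linear equivalence is transitive. *)
Lemma lin_equiv_trans (D1 D2 D3 : divisor Gam) :
  lin_equiv iota D1 D2 -> lin_equiv iota D2 D3 -> lin_equiv iota D1 D3.
Proof.
move=> [g1 [_ [k1 [slope1 D12]]]] [g2 [_ [k2 [slope2 D23]]]].
have Delta12 : is_Delta iota (fun x => g1 x + g2 x) (div_sub D1 D3).
  exists (fun e => k1 e + k2 e); split => [e he | v].
    by rewrite /gp_quot mulrzDr -slope1 // -slope2 // opprD addrACA.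
  by rewrite big_split /= -D12 -D23 /div_sub addrA subrK.
by exists (fun x => g1 x + g2 x); split => //; apply: Delta_PL Delta12.
Qed.

End LinearEquivalence.

Section Pullback.
Variables (M : nmodType) (G : zmodType) (iota : M -> G) (Gam T : mgraph M).
Variables (phi : gX Gam -> gX T) (mu m : gX Gam -> int).
Hypothesis Hphi : is_morphism iota phi.
Hypothesis Hmu : is_slope iota phi mu.
Hypothesis Hharm : harmonic phi mu m.
Local Notation X := (gX Gam).
Local Notation r' := (gr T).

Definition vtx_image (w : vtx Gam) : vtx T :=
  exist _ (phi (val w)) (proj1 Hphi _ (valP w)).

Lemma mult_atE (v : X) e' : is_vertex v ->
  mult_at phi mu v e' = if is_half_edge e' && (r' e' == phi v) then m v else 0.
Proof.
move=> vv; case: ifP => [/andP [he' /eqP re'] | not_at_v]; first exact: Hharm.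
apply: big1 => e /andP [/andP [he /eqP re] /eqP phie].
case: (boolP (is_half_edge e')) not_at_v => he' /= not_at_v.
  have [phi_r _ _] := proj1 (proj2 Hphi e) (etrans (f_equal _ phie) he').
  by move: not_at_v; rewrite -re phi_r phie eqxx.
by apply: (proj2 (Hmu he)); rewrite vertexE phie.
Qed.

Lemma Delta_pullback (f : gX T -> G) (DT : divisor T) :
  is_Delta iota f DT ->
  is_Delta iota (fun x => f (phi x)) (fun w => m (val w) * DT (vtx_image w)).
Proof.
case=> k' [slope_k' DTk']; exists (fun e => mu e * k' (phi e)); split.
  move=> e he; rewrite /gp_quot.
  case: (boolP (is_half_edge (phi e))) => hphie.
    have [-> -> _] := proj1 (proj2 Hphi e) hphie.
    by rewrite slope_k' // mulrzA -(proj1 (Hmu he) hphie).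
  have vphie : is_vertex (phi e) by rewrite vertexE.
  have [-> ->] := proj2 (proj2 Hphi e) vphie.
  by rewrite subrr (proj2 (Hmu he) vphie) mul0r mulr0z.
move=> v; apply: esym; rewrite (partition_big phi xpredT) //=.
transitivity (\sum_(e' : gX T) mult_at phi mu (val v) e' * k' e').
  apply: eq_bigr => e' _; rewrite /mult_at big_distrl /=.
  by apply: eq_bigr => e /andP [_ /eqP ->].
rewrite DTk' mulr_sumr [RHS]big_mkcond /=; apply: eq_bigr => e' _.
by rewrite mult_atE ?(valP v) //; case: ifP => _; rewrite ?mul0r.
Qed.

End Pullback.

Lemma path_eq_map (A : Type) (S : eqType) (f g : A -> S) (x : A) (s : seq A) :
  path (fun a b => f a == g b) x s = (map f (belast x s) == map g s).
Proof. by elim: s x => [|y s IH] x //=; rewrite IH eqseq_cons. Qed.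

Section Tree.
Variables (M : nmodType) (T : mgraph M).
Local Notation X := (gX T).
Local Notation r := (gr T).
Local Notation i := (gi T).
Hypothesis Hax : graph_axioms T.

(* A walk: half-edges hs leaving the successive vertices of x :: p and arriving
   at the vertices of p.  If the vertices are distinct, no edge is used twice. *)
Lemma walk_edges_uniq (hs : seq X) (x : X) (p : seq X) :
  map r hs = belast x p -> map (fun h => r (i h)) hs = p -> uniq (x :: p) ->
  uniq (hs ++ map i hs).
Proof.
elim: hs x p => [|h hs IH] x [|y p] //= [rh rest_r] [rih rest_ri].
move=> /andP [x_notin uniq_p]; rewrite -rh in x_notin.
have {}IH := IH y p rest_r rest_ri uniq_p.
have rest_at z : z \in hs ++ map i hs -> (r z \in y :: p) && (r (i z) \in y :: p).
  have in_p h' : h' \in hs -> r (i h') \in y :: p.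
    by move=> h'_in; rewrite in_cons -rest_ri (map_f (fun h => r (i h))) ?orbT.
  have in_yp h' : h' \in hs -> r h' \in y :: p.
    by move=> h'_in; apply: mem_belast; rewrite -rest_r map_f.
  rewrite mem_cat => /orP [z_in | /mapP [h' h'_in ->]].
    by rewrite in_p // in_yp.
  by rewrite (i_invol Hax) in_p // in_yp.
have h_out : h \notin hs ++ map i hs.
  by apply: contraNN x_notin => /rest_at /andP [].
have ih_out : i h \notin hs ++ map i hs.
  by apply: contraNN x_notin; rewrite -{2}(i_invol Hax h) => /rest_at /andP [].
have h_neq : h != i h.
  by apply/eqP => hih; move: x_notin; rewrite {1}hih rih in_cons eqxx.
rewrite -cat1s uniq_catCA cat1s /= IH andbT ih_out andbT.
by rewrite mem_cat in_cons orbCA -mem_cat negb_or h_neq h_out.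
Qed.

Definition avoids (e h : X) : bool := (h != e) && (h != i e).

Definition edge_off (e x y h : X) : bool :=
  [&& is_half_edge h, avoids e h, r h == x & r (i h) == y].

Definition adj_off (e : X) : rel X := fun x y => [exists h, edge_off e x y h].

Definition edge_sel (e x y : X) : X := odflt e [pick h | edge_off e x y h].

Lemma edge_selP e x y : adj_off e x y -> edge_off e x y (edge_sel e x y).
Proof.
move=> /existsP [h hP]; rewrite /edge_sel; case: pickP => [h' -> // | /(_ h)].
by rewrite hP.
Qed.

Lemma walk_off_edges e x p : path (adj_off e) x p ->
  [/\ all (@is_half_edge _ T) (pairmap (edge_sel e) x p),
      all (avoids e) (pairmap (edge_sel e) x p),
      map r (pairmap (edge_sel e) x p) = belast x p
    & map (fun h => r (i h)) (pairmap (edge_sel e) x p) = p].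
Proof.
elim: p x => [|y p IH] x //= /andP [/edge_selP /and4P [he av /eqP -> /eqP ->] /IH].
by case=> -> -> -> ->; rewrite he av.
Qed.

Lemma walk_cycle e hs p : is_half_edge e ->
  all (@is_half_edge _ T) hs -> all (avoids e) hs ->
  map r hs = belast (r e) p -> map (fun h => r (i h)) hs = p ->
  last (r e) p = r (i e) -> uniq (r e :: p) -> graph_cycle (rcons hs (i e)).
Proof.
move=> he hs_half /allP hs_av hs_r hs_ri last_p uniq_p.
have vertices : map r (rcons hs (i e)) = r e :: p.
  by rewrite map_rcons hs_r -last_p -lastI.
have i_inj := can_inj (i_invol Hax).
have e_out : e \notin hs ++ map i hs.
  rewrite mem_cat -{2}(i_invol Hax e) (mem_map i_inj) negb_or.
  by apply/andP; split; apply/negP => /hs_av; rewrite /avoids eqxx ?andbF.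
have ie_out : i e \notin hs ++ map i hs.
  rewrite mem_cat (mem_map i_inj) negb_or.
  by apply/andP; split; apply/negP => /hs_av; rewrite /avoids eqxx ?andbF.
apply/and5P; split.
- by rewrite size_rcons.
- by rewrite all_rcons half_edge_i // hs_half.
- by rewrite vertices.
- rewrite map_rcons (i_invol Hax) cat_rcons -cat1s uniq_catCA cat1s -rcons_cat /=.
  rewrite rcons_uniq mem_rcons in_cons negb_or i_half_edge_neq //= ie_out e_out.
  exact: walk_edges_uniq hs_r hs_ri uniq_p.
- rewrite (cycle_path e) last_rcons path_eq_map belast_rcons /= (i_invol Hax).
  by rewrite hs_ri vertices.
Qed.

Hypothesis Hnoc : forall s : seq X, ~~ graph_cycle s.

Lemma no_bypass e : is_half_edge e -> ~~ connect (adj_off e) (r e) (r (i e)).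
Proof.
move=> he; apply/negP => /connectP [p0 walk0 last0].
case: (shortenP walk0) last0 => p walk uniq_p _ last_p.
have [hs_half hs_av hs_r hs_ri] := walk_off_edges walk.
apply: (negP (Hnoc (rcons (pairmap (edge_sel e) (r e) p) (i e)))).
exact: walk_cycle hs_half hs_av hs_r hs_ri (esym last_p) uniq_p.
Qed.

End Tree.

Lemma sum_indicator (A : finType) (P : pred A) (a : A) :
  \sum_(x | P x) (if x == a then 1 else 0 : int) = if P a then 1 else 0.
Proof.
rewrite big_mkcond (bigD1 a) //= eqxx big1 ?addr0; first by case: (P a).
by move=> x /negPf ->; case: (P x).
Qed.

Section Cut.
Variables (M : nmodType) (G : zmodType) (iota : M -> G) (T : mgraph M).
Local Notation X := (gX T).
Local Notation r := (gr T).
Local Notation i := (gi T).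
Local Notation l := (gl T).
Hypothesis Hax : graph_axioms T.
Hypothesis Hmet : metrised T.

Definition cut_fun (e x : X) : G :=
  if connect (adj_off e) (r e) x then iota (l e) else 0.

Definition edge_div (e : X) : divisor T := fun w =>
  (if r e == val w then 1 else 0) - (if r (i e) == val w then 1 else 0).

Lemma cut_fun_avoids e h : is_half_edge h -> avoids e h ->
  cut_fun e (r h) = cut_fun e (r (i h)).
Proof.
move=> hh /andP [h_neq_e h_neq_ie].
have forward : adj_off e (r h) (r (i h)).
  by apply/existsP; exists h; rewrite /edge_off /avoids hh h_neq_e h_neq_ie !eqxx.
have backward : adj_off e (r (i h)) (r h).
  apply/existsP; exists (i h); rewrite /edge_off /avoids half_edge_i // (i_invol Hax).
  rewrite !eqxx !andbT (inj_eq (can_inj (i_invol Hax))) h_neq_e andbT.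
  by apply: contraNneq h_neq_ie => <-; rewrite (i_invol Hax).
rewrite /cut_fun; congr (if _ then _ else _).
by apply/idP/idP => conn; apply: connect_trans conn (connect1 _).
Qed.

Hypothesis Hnoc : forall s : seq X, ~~ graph_cycle s.

Lemma cut_Laplacian e : is_half_edge e -> is_Delta iota (cut_fun e) (edge_div e).
Proof.
move=> he; have disconnected := no_bypass Hax Hnoc he.
have e_neq_ie : e != i e by rewrite eq_sym i_half_edge_neq.
exists (fun h => (if h == e then 1 else 0) - (if h == i e then 1 else 0)); split.
  move=> h hh; rewrite /gp_quot.
  have [-> | h_neq_e] := eqVneq h e.
    by rewrite /cut_fun connect0 (negPf disconnected) (negPf e_neq_ie) !subr0 mulr1z.
  have [-> | h_neq_ie] := eqVneq h (i e).
    rewrite /cut_fun (i_invol Hax) connect0 (negPf disconnected) !sub0r.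
    by case: Hmet => -> _; rewrite mulrN1z.
  by rewrite cut_fun_avoids /avoids ?h_neq_e ?h_neq_ie // !subrr mulr0z.
by move=> w; rewrite big_split /= sumrN !sum_indicator half_edge_i // he.
Qed.

End Cut.

Lemma int_max_exists (P : int -> Prop) (k0 B : int) :
  P k0 -> (forall k, P k -> k <= B) ->
  exists rk, (P rk /\ forall k, P k -> k <= rk) /\ k0 <= rk.
Proof.
move=> Pk0 bounded.
suff from_below (N : nat) k : P k -> B - k <= N%:Z ->
    exists rk, (P rk /\ forall k', P k' -> k' <= rk) /\ k <= rk.
  by apply: (from_below `|B - k0|%N k0 Pk0); have := bounded _ Pk0; lia.
elim: N k => [|N IH] k Pk dist.
  by exists k; split; [split => // k' /bounded | ]; lia.
have [[k' [Pk' lt_kk']] | no_larger] := classic (exists k', P k' /\ k < k').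
  have [rk [max_rk le_k'rk]] := IH k' Pk' ltac:(have := bounded _ Pk'; lia).
  by exists rk; split => //; lia.
exists k; split => //; split => // k' Pk'; rewrite leNgt; apply/negP => lt_kk'.
by apply: no_larger; exists k'.
Qed.

Section Rank.
Variables (M : nmodType) (Gam : mgraph M) (G : zmodType) (iota : M -> G).
Hypothesis HGam : is_mgraph Gam.
Hypothesis HMsharp : sharp_monoid M.
Hypothesis Hgp : groupification iota.

Lemma deg_ge0 (D : divisor Gam) : effective D -> 0 <= deg D.
Proof. by move=> D_ge0; apply: sumr_ge0 => w _; apply: D_ge0. Qed.

Lemma deg_sub (D1 D2 : divisor Gam) : deg (div_sub D1 D2) = deg D1 - deg D2.
Proof. by rewrite /deg /div_sub sumrB. Qed.

Lemma lin_equiv_deg (D D' : divisor Gam) : lin_equiv iota D D' -> deg D = deg D'.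
Proof.
case: HGam => [Hax _ Hmet] [g [_ Dg]].
by apply/eqP; rewrite -subr_eq0 -deg_sub (Laplacian_deg0 Hax Hmet HMsharp Hgp Dg).
Qed.

(* r(D) <= deg D for a divisor of nonnegative degree: removing deg D + 1
   points at one vertex leaves a class of negative degree. *)
Lemma rank_le_deg (D : divisor Gam) k : 0 <= deg D -> rank_cond iota D k -> k <= deg D.
Proof.
move=> D_ge0 rank_k; rewrite leNgt; apply/negP => lt_deg_k.
case: HGam => [_ [[x0 vx0] _] _]; pose w0 : vtx Gam := exist _ x0 vx0.
pose F : divisor Gam := fun w => if w == w0 then k else 0.
have F_ge0 : effective F by move=> w; rewrite /F; case: ifP => _ //; lia.
have degF : deg F = k.
  by rewrite /deg (bigD1 w0) //= /F eqxx big1 ?addr0 // => w /negPf ->.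
have [E [E_ge0 /lin_equiv_deg]] := rank_k F F_ge0 degF.
by rewrite deg_sub degF; have := deg_ge0 E_ge0; lia.
Qed.

Lemma effective_deg1 (F : divisor Gam) : effective F -> deg F = 1 ->
  exists w, F w = 1 /\ forall w', w' != w -> F w' = 0.
Proof.
move=> F_ge0 degF.
have [w /= Fw_gt0 | F_le0] := pickP (fun w => 0 < F w); last first.
  move: degF; rewrite /deg big1 // => w _.
  by apply/eqP; rewrite eq_le F_ge0 andbT leNgt F_le0.
move: degF; rewrite /deg (bigD1 w) //=; set rest := \sum_(w' | _) _ => degF.
have rest_ge0 : 0 <= rest by apply: sumr_ge0 => *; apply: F_ge0.
have rest0 : rest = 0 by lia.
by exists w; split; [lia | apply: psumr_eq0P rest0 => w' _; apply: F_ge0].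
Qed.

Lemma rank_ge1 (D : divisor Gam) :
  (forall w, exists E, [/\ effective E, 1 <= E w & lin_equiv iota E D]) ->
  rank_cond iota D 1.
Proof.
move=> covered F F_ge0 /(effective_deg1 F_ge0) [w [Fw F_off]].
have [E [E_ge0 Ew_ge1 ED]] := covered w.
exists (div_sub E F); split.
  move=> w'; rewrite /div_sub; have [-> | /F_off ->] := eqVneq w' w; last first.
    by rewrite subr0.
  by rewrite Fw subr_ge0.
by apply: lin_equiv_ext ED => v; rewrite /div_sub; lia.
Qed.

Lemma rank_exists (D : divisor Gam) :
  0 <= deg D -> rank_cond iota D 1 -> exists rk, is_rank iota D rk /\ 1 <= rk.
Proof.
move=> D_ge0 rank1; apply: (int_max_exists rank1) => k.
exact: rank_le_deg.
Qed.

End Rank.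

Section Fibres.
Variables (M : nmodType) (G : zmodType) (iota : M -> G) (Gam T : mgraph M).
Variables (phi : gX Gam -> gX T) (mu m : gX Gam -> int).
Hypothesis HT : is_mtree T.
Hypothesis Hphi : is_morphism iota phi.
Hypothesis Hmu : is_slope iota phi mu.
Hypothesis Hharm : harmonic phi mu m.
Local Notation r' := (gr T).
Local Notation i' := (gi T).

Definition fibre_div (a : gX T) : divisor Gam :=
  fun w => if phi (val w) == a then m (val w) else 0.

(* The pullbacks of the two ends of an edge of T are linearly equivalent: pull
   back the cut function of that edge. *)
Lemma fibre_edge e : is_half_edge e ->
  lin_equiv iota (fibre_div (r' e)) (fibre_div (r' (i' e))).
Proof.
move=> he; case: HT => [[HaxT _ HmetT] Hnoc].
have Dcut := Delta_pullback Hphi Hmu Hharm (cut_Laplacian iota HaxT HmetT Hnoc he).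
exists (fun x => cut_fun iota e (phi x)); split; first exact: Delta_PL Dcut.
apply: Delta_ext Dcut => w; rewrite /edge_div /div_sub /fibre_div /= !(eq_sym (phi _)).
by case: (_ == phi _); case: (_ == phi _); rewrite ?mulrBr ?mulr1 ?mulr0 ?subr0 ?sub0r ?subrr.
Qed.

Lemma fibre_incid x y : incid x y -> lin_equiv iota (fibre_div (r' x)) (fibre_div (r' y)).
Proof.
case: HT => [[HaxT _ _] _].
case/or3P => /eqP ->; rewrite ?(r_idem HaxT); try exact: lin_equiv_refl.
have [hx | vx] := boolP (is_half_edge x); first exact: fibre_edge.
by rewrite i_vertex ?vertexE //; apply: lin_equiv_refl.
Qed.

(* Since T is connected, all pullbacks of vertices are linearly equivalent. *)
Lemma fibres_equiv a b : is_vertex a -> is_vertex b ->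
  lin_equiv iota (fibre_div a) (fibre_div b).
Proof.
move=> /eqP ra /eqP rb; case: HT => [[_ [_ conn] _] _].
case/connectP: (conn a b) => p walk b_last.
rewrite -ra -rb b_last {ra rb b_last}.
elim: p a walk => [|y p IH] x /=; first by move=> _; apply: lin_equiv_refl.
by case/andP => /fibre_incid xy /IH; apply: lin_equiv_trans.
Qed.

Hypothesis Hnd : nondegen_mult m.

Lemma fibre_ge0 a : effective (fibre_div a).
Proof. by move=> w; rewrite /fibre_div; case: ifP => // _; apply/ltW/Hnd/valP. Qed.

(* Every vertex w lies in the fibre phi^*[phi w], so phi^*[a] has rank >= 1. *)
Lemma fibre_rank_ge1 a : is_vertex a -> rank_cond iota (fibre_div a) 1.
Proof.
move=> va; apply: rank_ge1 => w; exists (fibre_div (phi (val w))); split.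
- exact: fibre_ge0.
- by rewrite /fibre_div eqxx; apply/Hnd/valP.
- by apply: fibres_equiv => //; apply/(proj1 Hphi)/valP.
Qed.

Lemma fibre_deg e' : is_half_edge e' ->
  deg (fibre_div (r' e')) =
  \sum_(v | is_vertex v && (phi v == r' e')) mult_at phi mu v e'.
Proof.
move=> he'; rewrite /deg /fibre_div.
rewrite (sum_vtx (fun x => if phi x == r' e' then m x else 0)) -big_mkcondr.
by apply: eq_bigr => v /andP [vv /eqP phiv]; rewrite (mult_atE Hphi Hmu Hharm) // he' phiv eqxx.
Qed.

End Fibres.

Unset Implicit Arguments.

Theorem theorem3p1 (M : nmodType) (G : zmodType) (iota : M -> G)
  (HMsharp : sharp_monoid M) (HMint : integral_monoid M)
  (Hgp : groupification iota)
  (Gam : mgraph M) (HGam : is_mgraph Gam)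
  (T : mgraph M) (HT : is_mtree T)
  (phi : gX Gam -> gX T) (mu m : gX Gam -> int) (n : int)
  (Hphi : is_morphism iota phi) (Hmu : is_slope iota phi mu)
  (Hharm : harmonic phi mu m) (Hnd : nondegen_mult m)
  (Hdeg : has_degree phi mu n) :
  dgon_le Gam iota n.
Proof.
case: Hdeg => [[e' he'] deg_phi].
have HaxT : graph_axioms T by case: HT => [[]].
exists (fibre_div phi m (gr T e')); split.
  apply: rank_exists => //; first exact/deg_ge0/fibre_ge0.
  exact: (fibre_rank_ge1 HT Hphi Hmu Hharm Hnd (vertex_r HaxT e')).
by rewrite (fibre_deg Hphi Hmu Hharm he') deg_phi.
Qed.
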